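(* There is no constant $k$ such that every graph is a $k$-interval-PCG.
   Context: All trees are unrooted with edges weighted by nonnegative reals; $d_T(u,v)$ is the weight of the path between leaves $u,v$ of $T$. A graph $G$ is a $k$-interval-PCG if there exist a tree $T$ whose leaf set is $V(G)$ and $k$ pairwise disjoint intervals $I_1,\ldots,I_k$ of nonnegative reals such that $\{u,v\}\in E(G)$ iff $d_T(u,v)\in I_i$ for some $i$. *)

From HB Require Import structures.
From mathcomp Require Import all_boot all_order all_algebra.
From mathcomp Require Import reals.
Set Implicit Arguments. Unset Strict Implicit. Unset Printing Implicit Defensive.
Import Order.TTheory GRing.Theory Num.Theory.
Local Open Scope ring_scope.

(* A path from u is given (ssreflect convention) by the list p of
   the nodes following u; it ends at last u p. *)
Definition simple_path (N : finType) (adj : rel N) (u v : N) (p : seq N) :=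
  [&& path adj u p, last u p == v & uniq (u :: p)].

Definition is_tree (N : finType) (adj : rel N) : Prop :=
  symmetric adj /\ irreflexive adj /\
  forall u v : N, exists! p : seq N, simple_path adj u v p.

(* leaves: nodes of degree at most one (degree 0 only in a one-node tree) *)
Definition is_leaf (N : finType) (adj : rel N) (x : N) : bool :=
  (#|[set y | adj x y]| <= 1)%N.

Definition path_weight (R : realType) (N : finType) (w : N -> N -> R)
  (u : N) (p : seq N) : R :=
  \sum_(x <- pairmap w u p) x.

Definition k_interval_PCG (R : realType) (k : nat) (T : finType) (E : rel T)
  : Prop :=
  exists (N : finType) (adj : rel N) (w : N -> N -> R) (f : T -> N)
         (I : 'I_k -> interval R),
    is_tree adj /\
    (forall x y, adj x y -> 0 <= w x y /\ w x y = w y x) /\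
    injective f /\
    (forall x : N, is_leaf adj x <-> exists t, f t = x) /\
    (forall i x, x \in I i -> 0 <= x) /\
    (forall i j, i != j -> forall x, ~ (x \in I i /\ x \in I j)) /\
    (forall u v, u != v ->
       (E u v <-> exists p, simple_path adj (f u) (f v) p /\
                    exists i, path_weight w (f u) p \in I i)).

From HB Require Import structures.
From mathcomp Require Import all_boot all_order all_algebra.
From mathcomp Require Import reals.
From mathcomp Require Import zify.
From Stdlib Require Import Lia.
Set Implicit Arguments. Unset Strict Implicit. Unset Printing Implicit Defensive.
Import Order.TTheory GRing.Theory Num.Theory.

(* A counting argument.  Split the leaves of a tree realizing G recursively at centroids:
   each split at least halves a cell, so after log |V| levels any two leaves a, b
   are separated.  At the level where they are, the tree path from a to b passes
   through the centroid c of their common cell, so d(a, b) = d(c, a) + d(c, b);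
   hence, for fixed a and a fixed interval, the partners b at that level form a
   range of ranks of d(c, .).  Recording cell labels, ranks and these ranges
   describes G with O(k |V| log^2 |V|) bits, too few for the 2^(n^2) bipartite
   graphs on n + n vertices once n is large. *)

Lemma itv_convex d (T : porderType d) (i : interval T) (x y z : T) :
  x \in i -> z \in i -> (x <= y <= z)%O -> y \in i.
Proof.
case: i => l r; rewrite !itv_boundlr => /andP[lx _] /andP[_ zr] /andP[xy yz].
by rewrite (le_trans lx) ?(le_trans _ zr) ?leBSide.
Qed.

Section Rank.
Variables (R : realType) (V : finType) (g : V -> R).

Definition rank b := #|[set u | (g u < g b)%R]|.

Lemma rank_lt b : rank b < #|V|.
Proof.
rewrite -cardsT; apply: proper_card; rewrite properT.
by apply/eqP => /setP /(_ b); rewrite !inE ltxx.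
Qed.

Lemma leq_rank u v : (rank u <= rank v) = (g u <= g v)%R.
Proof.
apply/idP/idP => [|guv]; last first.
  apply/subset_leq_card/subsetP => x; rewrite !inE => /lt_le_trans; exact.
apply: contraLR; rewrite -ltNge -ltnNge => gvu.
apply/proper_card/properP; split; last by exists v; rewrite !inE ?ltxx.
by apply/subsetP => x; rewrite !inE => /lt_trans; apply.
Qed.

Lemma rank_cut (P : pred R) :
  (forall x y z, P x -> P z -> (x <= y <= z)%R -> P y) ->
  exists lo hi : 'I_#|V|.+1, forall b, P (g b) = (lo <= rank b <= hi).
Proof.
move=> P_convex.
have [b0 Pb0 | noP] := pickP [pred b | P (g b)]; last first.
  exists ord_max, ord0 => b; have := noP b; rewrite /= => ->.
  by rewrite leqNgt rank_lt.
have [bmin Pbmin min_bmin] := arg_minnP rank Pb0.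
have [bmax Pbmax max_bmax] := arg_maxnP rank Pb0.
exists (Ordinal (leqW (rank_lt bmin))), (Ordinal (leqW (rank_lt bmax))) => b /=.
apply/idP/idP => [Pb | /andP[lo_b b_hi]]; first by rewrite min_bmin //=; apply: max_bmax.
by apply: (P_convex _ _ _ Pbmin Pbmax); rewrite -!leq_rank lo_b.
Qed.

End Rank.

Section CentroidDecomposition.
Variables (V C : finType) (B : eqType) (part : C -> V -> B) (c0 : C).

Definition balanced (X : {set V}) (c : C) :=
  [forall a in X, 2 * #|[set b in X | part c b == part c a]| <= #|X|].

Hypothesis balanced_exists : forall X : {set V}, 1 < #|X| -> exists c, balanced X c.

Definition center (X : {set V}) := odflt c0 [pick c | balanced X c].

Lemma center_balanced (X : {set V}) : 1 < #|X| -> balanced X (center X).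
Proof.
move=> /balanced_exists[c bal_c]; rewrite /center.
by case: pickP => [c' //|/(_ c)]; rewrite bal_c.
Qed.

Fixpoint cell l a : {set V} :=
  if l is l'.+1 then
    let X := cell l' a in [set b in X | part (center X) b == part (center X) a]
  else setT.

Lemma cell_self l a : a \in cell l a.
Proof. by elim: l => [|l IH] /=; rewrite inE ?IH ?eqxx. Qed.

Lemma cell_eq l a b : b \in cell l a -> cell l b = cell l a.
Proof.
elim: l a b => [//|l IH] a b /=; rewrite inE => /andP[b_l /eqP part_b].
by rewrite (IH _ _ b_l) part_b.
Qed.

Lemma subset_cellS l a : cell l.+1 a \subset cell l a.
Proof. by apply/subsetP => x; rewrite inE => /andP[]. Qed.

Lemma card_cell l a : 1 < #|cell l a| -> 2 ^ l * #|cell l a| <= #|V|.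
Proof.
elim: l => [|l IH] gt1_S; first by rewrite mul1n cardsT.
have gt1 : 1 < #|cell l a| := leq_trans gt1_S (subset_leq_card (subset_cellS l a)).
have /forall_inP/(_ a (cell_self l a)) half := center_balanced gt1.
by rewrite expnS -mulnA mulnCA (leq_trans _ (IH gt1)) // leq_mul.
Qed.

Lemma cell_separates L a b : a != b -> #|V| < 2 ^ L ->
  exists2 l, l < L & (b \in cell l a) && (b \notin cell l.+1 a).
Proof.
move=> neq_ab small_V.
have out_L : b \notin cell L a.
  apply: contraTN small_V => b_L; rewrite -leqNgt.
  have gt1 : 1 < #|cell L a| by apply/card_gt1P; exists a, b; rewrite cell_self.
  by rewrite (leq_trans _ (card_cell gt1)) // leq_pmulr // ltnW.
have ex_out : exists l, b \notin cell l a by exists L.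
have [[|l] out_l min_l] := ex_minnP ex_out; first by rewrite inE in out_l.
exists l; first exact: min_l.
by rewrite out_l andbT; apply: contraT => /min_l; rewrite ltnn.
Qed.

Lemma cell_part_neq l a b : b \in cell l a -> b \notin cell l.+1 a ->
  part (center (cell l a)) a != part (center (cell l a)) b.
Proof. by move=> b_l; rewrite inE b_l eq_sym. Qed.

End CentroidDecomposition.

Lemma leq_exp2rW m n e : m <= n -> m ^ e <= n ^ e.
Proof. by move=> le_mn; elim: e => // e IH; rewrite !expnS leq_mul. Qed.

Section Code.
Variables (R : realType) (k L : nat) (V : finType).

(* Entry (l, a): labels of the cells of a at levels l and l.+1, the rank of
   h l a, and for each interval i the range of ranks of h l b for which
   h l a + h l b lies in interval i. *)
Definition cell_data :=
  (V * V * 'I_#|V| * {ffun 'I_k -> 'I_#|V|.+1 * 'I_#|V|.+1})%type.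

Definition code := {ffun 'I_L * V -> cell_data}.

Definition decode (c : code) (a b : V) : bool :=
  [exists l : 'I_L,
     let: (la, la', _, cut) := c (l, a) in
     let: (lb, lb', rb, _) := c (l, b) in
     [&& la == lb, la' != lb' & [exists i, (cut i).1 <= rb <= (cut i).2]]].

Lemma card_code : #|V| < 2 ^ L -> #|{: code}| <= 2 ^ (L * (2 * k + 3) * (L * #|V|)).
Proof.
move=> small_V; have le_V := ltnW small_V.
rewrite !(card_ffun, card_prod, card_ord) [2 ^ _]expnM leq_exp2rW //.
rewrite [2 ^ _]expnM addnC expnD expnM.
have le_V3 : #|V| * #|V| * #|V| <= (2 ^ L) ^ 3 by rewrite -mulnA !leq_mul.
exact: leq_mul le_V3 (leq_exp2rW _ (leq_mul small_V small_V)).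
Qed.

Variables (I : 'I_k -> interval R) (d : V -> V -> R).
Variables (cell : nat -> V -> {set V}) (h : nat -> V -> R).
Hypothesis cell_refl : forall l a, a \in cell l a.
Hypothesis cell_shared : forall l a b, b \in cell l a -> cell l b = cell l a.
Hypothesis split_level : forall a b, a != b ->
  exists2 l, l < L & (b \in cell l a) && (b \notin cell l.+1 a).
Hypothesis d_split : forall l a b, b \in cell l a -> b \notin cell l.+1 a ->
  d a b = (h l a + h l b)%R.

Definition label l a := odflt a [pick z in cell l a].

Lemma label_eq l a b : (label l a == label l b) = (b \in cell l a).
Proof.
have label_in c : label l c \in cell l c.
  by rewrite /label; case: pickP => [//|/(_ c)]; rewrite cell_refl.
apply/idP/idP => [/eqP eq_ab | b_a].
  have := label_in a; rewrite eq_ab => /cell_shared <-.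
  by rewrite (cell_shared (label_in b)) cell_refl.
rewrite /label (cell_shared b_a); case: pickP => [//|/(_ a)].
by rewrite cell_refl.
Qed.

Lemma decode_exists : exists c : code, forall a b, a != b ->
  [exists i, d a b \in I i] = decode c a b.
Proof.
have cuts (x : 'I_L * V * 'I_k) : exists p : 'I_#|V|.+1 * 'I_#|V|.+1,
    forall b, (h x.1.1 x.1.2 + h x.1.1 b \in I x.2)%R = (p.1 <= rank (h x.1.1) b <= p.2).
  case: x => [[l a] i] /=.
  have [|lo [hi cut_lh]] := rank_cut (h l) (P := fun y => h l a + y \in I i)%R.
    move=> y1 y y2 in1 in2 /andP[le1 le2]; apply: itv_convex in1 in2 _.
    by rewrite !lerD2l le1.
  by exists (lo, hi).
have [cut cutP] := fin_all_exists cuts.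
exists [ffun x : 'I_L * V => (label x.1 x.2, label x.1.+1 x.2,
  Ordinal (rank_lt (h x.1) x.2), [ffun i => cut (x.1, x.2, i)])].
move=> a b neq_ab; rewrite /decode.
under [RHS]eq_existsb => l do rewrite !ffunE /= !label_eq.
under [RHS]eq_existsb => l do
  under eq_existsb => i do rewrite ffunE -(cutP (l, a, i)) /=.
apply/existsP/existsP => [[i d_i] | [l /and3P[in_l out_l /existsP[i]]]].
  have [l lt_lL /andP[in_l out_l]] := split_level neq_ab.
  exists (Ordinal lt_lL); rewrite in_l out_l -d_split //.
  by apply/existsP; exists i.
by exists i; rewrite (d_split in_l out_l).
Qed.

End Code.

Lemma last_rev_belast (T : Type) (x : T) p : last (last x p) (rev (belast x p)) = x.
Proof. by case: p => [|y p] //=; rewrite rev_cons last_rcons. Qed.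

Lemma sum_nat_bool (T : finType) (X : {set T}) (P : pred T) :
  \sum_(b in X) (P b : nat) = #|[set b in X | P b]|.
Proof.
rewrite -sum1dep_card big_mkcondr /=.
by apply: eq_bigr => b _; case: (P b).
Qed.

Section TreePaths.
Variables (N : finType) (adj : rel N).
Hypothesis adj_sym : symmetric adj.
Hypothesis adj_irr : irreflexive adj.
Hypothesis simple_path_unique : forall u v : N, exists! p, simple_path adj u v p.

Lemma simple_path_exists u v : exists p, simple_path adj u v p.
Proof. by have [p [? _]] := simple_path_unique u v; exists p. Qed.

Definition tpath u v := xchoose (simple_path_exists u v).

Lemma tpathP u v : simple_path adj u v (tpath u v).
Proof. exact: xchooseP. Qed.

Lemma tpath_unique u v p : simple_path adj u v p -> p = tpath u v.
Proof.
have [q [_ q_uniq]] := simple_path_unique u v.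
by move=> /q_uniq <-; apply: q_uniq; apply: tpathP.
Qed.

Lemma tpath_adj u v : adj u v -> tpath u v = [:: v].
Proof.
move=> uv; symmetry; apply: tpath_unique.
apply/and3P; split; rewrite /= ?uv ?inE ?andbT //.
by apply: contraTneq uv => ->; rewrite adj_irr.
Qed.

Definition branch c v := head c (tpath c v).

Lemma adj_branch c v : v != c -> adj c (branch c v).
Proof.
have /and3P[] := tpathP c v; rewrite /branch.
by case: (tpath c v) => [_ /eqP <- _|y p /= /andP[]//]; rewrite /= eqxx.
Qed.

Lemma branch_eq_self c v : (branch c v == c) = (v == c).
Proof.
have [-> | neq_vc] := eqVneq v c.
  have c_c : simple_path adj c c [::] by rewrite /simple_path /= eqxx.
  by rewrite /branch -(tpath_unique c_c) eqxx.
by apply/negbTE; apply: contraTneq (adj_branch neq_vc) => ->; rewrite adj_irr.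
Qed.

Lemma branch_on_tpath c v y : y \in tpath c v -> branch c y = branch c v.
Proof.
have /and3P[p_path _ p_uniq] := tpathP c v.
move=> y_in; have prefix : simple_path adj c y (take (index y (tpath c v)).+1 (tpath c v)).
  apply/and3P; split.
  - move: p_path; rewrite -{1}(cat_take_drop (index y (tpath c v)).+1 (tpath c v)).
    by rewrite cat_path => /andP[].
  - by rewrite (last_nth c) size_takel ?index_mem //= nth_take ?nth_index.
  - move: p_uniq; rewrite /= => /andP[c_notin p_uniq]; rewrite take_uniq // andbT.
    by apply: contra c_notin => /mem_take.
by rewrite /branch -(tpath_unique prefix); case: (tpath c v) y_in.
Qed.

Lemma tpath_toward c v y : adj c y -> branch c v = y -> tpath c v = y :: tpath y v.
Proof.
move=> cy; rewrite /branch; have /and3P[] := tpathP c v.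
case: (tpath c v) => [_ _ _ /= eq_cy | z p /= /andP[_ zp] last_p /andP[_ uniq_p] <-].
  by rewrite eq_cy adj_irr in cy.
by congr (_ :: _); apply: tpath_unique; apply/and3P.
Qed.

Lemma tpath_away c v y : adj c y -> branch c v != y -> tpath y v = c :: tpath c v.
Proof.
move=> cy not_toward; symmetry; apply: tpath_unique.
have /and3P[p_path p_last p_uniq] := tpathP c v.
apply/and3P; split; rewrite /= ?p_path ?andbT //; first by rewrite adj_sym.
move: p_uniq => /= ->; rewrite andbT in_cons negb_or; apply/andP; split.
  by apply: contraTneq cy => ->; rewrite adj_irr.
by apply: contra not_toward => /branch_on_tpath <-; rewrite /branch tpath_adj.
Qed.

Lemma size_tpath_step c y v : adj c y ->
  size (tpath y v) + (branch c v == y) = size (tpath c v) + (branch c v != y).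
Proof.
move=> cy; have [/(tpath_toward cy) -> | /(tpath_away cy) ->] := eqVneq.
  by rewrite addn1 addn0.
by rewrite addn0 addn1.
Qed.

Section Distance.
Variables (R : realType) (w : N -> N -> R).
Hypothesis w_sym : forall x y, adj x y -> w x y = w y x.

Definition dist u v := path_weight w u (tpath u v).

Lemma path_weight_cat x s1 s2 :
  path_weight w x (s1 ++ s2) = (path_weight w x s1 + path_weight w (last x s1) s2)%R.
Proof. by rewrite /path_weight pairmap_cat big_cat. Qed.

Lemma path_weight_rev x p : path adj x p ->
  path_weight w (last x p) (rev (belast x p)) = path_weight w x p.
Proof.
elim: p x => [//|y p IH] x /= /andP[xy yp].
rewrite rev_cons -cats1 path_weight_cat IH // last_rev_belast.
by rewrite /path_weight /= !big_cons big_nil addr0 addrC (w_sym xy).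
Qed.

Lemma dist_split c x y : branch c x != branch c y -> dist x y = (dist c x + dist c y)%R.
Proof.
move=> diff_branch; set px := tpath c x; set py := tpath c y.
have /and3P[px_path /eqP px_last px_uniq] := tpathP c x.
have /and3P[py_path /eqP py_last py_uniq] := tpathP c y.
have back_last : last x (rev (belast c px)) = c.
  by rewrite -px_last last_rev_belast.
have xy_path : simple_path adj x y (rev (belast c px) ++ py).
  apply/and3P; split.
  - rewrite cat_path back_last py_path andbT -px_last rev_path.
    by rewrite (@eq_path _ _ adj) // => a b; rewrite adj_sym.
  - by rewrite last_cat back_last py_last.
  - have -> : x :: rev (belast c px) ++ py = rev (c :: px) ++ py.
      by rewrite (lastI c px) rev_rcons px_last.
    rewrite cat_uniq rev_uniq px_uniq /=.
    move: py_uniq => /= /andP[c_notin ->]; rewrite andbT.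
    apply/hasPn => z z_py; rewrite mem_rev in_cons negb_or.
    apply/andP; split; first by apply: contraTneq z_py => ->.
    apply: contra diff_branch => z_px.
    by rewrite -(branch_on_tpath z_px) (branch_on_tpath z_py).
have := path_weight_rev px_path; rewrite px_last => back_weight.
by rewrite /dist -(tpath_unique xy_path) path_weight_cat back_last back_weight.
Qed.

End Distance.

Lemma tree_centroid_exists (V : finType) (f : V -> N) (X : {set V}) :
  injective f -> 1 < #|X| -> exists c, balanced (fun c a => branch c (f a)) X c.
Proof.
move=> f_inj gt1_X; have [a0 _] : exists a0, a0 \in X.
  by apply/set0Pn; rewrite -card_gt0 ltnW.
(* A node minimizing the total number of edges on the paths to f @: X is a
   centroid: one step into a branch holding more than half of X decreases it. *)
pose load c := \sum_(b in X) size (tpath c (f b)).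
have [c _ c_min] := arg_minnP load (erefl : xpredT (f a0)).
exists c; apply/forall_inP => a a_X; set y := branch c (f a).
have [y_c | y_nc] := eqVneq y c.
  have fa_c : f a = c by apply/eqP; rewrite -branch_eq_self; apply/eqP.
  have S_sub : [set b in X | branch c (f b) == y] \subset [set a].
    apply/subsetP => b; rewrite !inE y_c branch_eq_self => /andP[_ /eqP fb_c].
    by apply/eqP/f_inj; rewrite fb_c.
  by have := subset_leq_card S_sub; rewrite cards1; lia.
have cy : adj c y by apply: adj_branch; rewrite -branch_eq_self.
have load_step : \sum_(b in X) (size (tpath y (f b)) + (branch c (f b) == y)) =
                  \sum_(b in X) (size (tpath c (f b)) + (branch c (f b) != y)).
  by apply: eq_bigr => b _; apply: size_tpath_step.
rewrite !big_split /= in load_step.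
have split_X :
    \sum_(b in X) (branch c (f b) == y) + \sum_(b in X) (branch c (f b) != y) = #|X|.
  by rewrite -big_split -sum1_card; apply: eq_bigr => b _; case: eqP.
move: (c_min y isT) load_step split_X; rewrite /load -sum_nat_bool.
set P := \sum_(b in X) (branch c (f b) == y).
set Q := \sum_(b in X) (branch c (f b) != y).
set Ly := \sum_(b in X) size (tpath y (f b)).
set Lc := \sum_(b in X) size (tpath c (f b)).
lia.
Qed.

End TreePaths.

Lemma PCG_code (R : realType) (k L : nat) (V : finType) (E : rel V) :
  #|V| < 2 ^ L -> k_interval_PCG R k E ->
  exists c : code k L V, forall a b, a != b -> E a b = decode c a b.
Proof.
move=> small_V [N [adj [w [f [I [[adj_sym [adj_irr path_uniq]] PCG]]]]]].
case: PCG => w_ok [f_inj [_ [_ [_ E_iff]]]].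
have [a0 _ | V0] := pickP (@predT V); last first.
  by exists [ffun x => (x.2, x.2, enum_rank x.2, [ffun=> (ord0, ord0)])] => a; have := V0 a.
have w_sym x y : adj x y -> w x y = w y x by move=> /w_ok[].
pose part c a := branch path_uniq c (f a).
pose cl := cell part (f a0).
pose h l a := dist path_uniq w (center part (f a0) (cl l a)) (f a).
have bal (X : {set V}) : 1 < #|X| -> exists c, balanced part X c.
  exact: tree_centroid_exists.
have split_at l a b : b \in cl l a -> b \notin cl l.+1 a ->
    dist path_uniq w (f a) (f b) = (h l a + h l b)%R.
  move=> in_l out_l; rewrite /h /cl (cell_eq in_l).
  by apply: (dist_split adj_sym w_sym); apply: (cell_part_neq in_l out_l).
have [c c_ok] := decode_exists I (@cell_self _ _ _ part (f a0)) (@cell_eq _ _ _ part (f a0))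
  (fun a b neq_ab => cell_separates (f a0) bal neq_ab small_V) split_at.
exists c => a b neq_ab; rewrite -c_ok //.
apply/idP/existsP => [/(E_iff _ _ neq_ab)[p [ab_p [i in_i]]] | [i in_i]].
  by exists i; rewrite /dist -(tpath_unique path_uniq ab_p).
apply/(E_iff _ _ neq_ab); exists (tpath path_uniq (f a) (f b)).
by split; [apply: tpathP | exists i].
Qed.

Lemma cube_lt_exp2 j : 10 <= j -> j ^ 3 < 2 ^ j.
Proof.
elim: j => // j IH; rewrite leq_eqVlt => /predU1P[<- // | ge10].
have step : j.+1 ^ 3 <= 2 * j ^ 3 by rewrite !expnS expn0 !muln1; nia.
by rewrite (leq_ltn_trans step) // [2 ^ _]expnS ltn_pmul2l // IH.
Qed.

Lemma exp2_gt_quadratic c : exists m, c * m.+2 ^ 2 < 2 ^ m.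
Proof.
set m := 4 * c + 8; exists m.
have ge10 : 10 <= m.+2 by rewrite /m; lia.
have le_4c : 4 * c <= m.+2 by rewrite /m; lia.
have := cube_lt_exp2 ge10; rewrite expnS !(expnS 2) mulnA => lt_cube.
rewrite -(ltn_pmul2l (isT : 0 < 4)) mulnA (leq_ltn_trans _ lt_cube) //.
by rewrite leq_mul.
Qed.

Definition bipartite_rel n (g : {ffun 'I_n * 'I_n -> bool}) : rel ('I_n + 'I_n) :=
  fun a b => match a, b with
             | inl i, inr j | inr j, inl i => g (i, j)
             | _, _ => false
             end.

Lemma bipartite_rel_sym n g : symmetric (@bipartite_rel n g).
Proof. by case=> [i|j] [i'|j']. Qed.

Lemma bipartite_rel_irr n g : irreflexive (@bipartite_rel n g).
Proof. by case. Qed.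

Theorem corollary1 (R : realType) :
  ~ exists k : nat, forall (T : finType) (E : rel T),
      symmetric E -> irreflexive E -> k_interval_PCG R k E.
Proof.
case=> k PCG_all.
have [m small_m] := exp2_gt_quadratic (2 * (2 * k + 3)); set n := 2 ^ m in small_m.
have small_V : #|{: 'I_n + 'I_n}| < 2 ^ m.+2.
  by rewrite card_sum card_ord addnn -mul2n -expnS ltn_exp2l.
have enc (g : {ffun 'I_n * 'I_n -> bool}) : exists c : code k m.+2 ('I_n + 'I_n)%type,
    forall ij, g ij = decode c (inl ij.1) (inr ij.2).
  have := PCG_all _ _ (bipartite_rel_sym g) (bipartite_rel_irr g).
  case/(PCG_code small_V) => c c_ok.
  by exists c => -[i j]; rewrite -c_ok.
have [F F_ok] := fin_all_exists enc.
have F_inj : injective F.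
  by move=> g g' eq_F; apply/ffunP => ij; rewrite (F_ok g) (F_ok g') eq_F.
have := leq_trans (leq_card _ F_inj) (card_code k small_V).
rewrite card_ffun card_bool card_prod card_sum !card_ord leq_exp2l //.
move: small_m; nia.
Qed.
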